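(* A reaction network $(X,\mathscr{R})$ admits a Lewis realization if and only if it is conservative.
   Context: A reaction network (RN) $(X,\mathscr{R})$ consists of a finite non-empty set $X$ of species and a finite non-empty set $\mathscr{R}$ of reactions. Each reaction $r$ is given by stoichiometric coefficients $s^-_{xr},s^+_{xr}\in\mathbb{N}_0$. The stoichiometric matrix $S\in\mathbb{Z}^{X\times\mathscr{R}}$ has entries $S_{xr}=s^+_{xr}-s^-_{xr}$. The paper assumes throughout that RNs are closed: every reaction $r$ has $x,y$ with $S_{xr}<0<S_{yr}$. The RN is conservative if there is $m\in\mathbb{R}^X$ with all entries positive and $m^\top S=0$. An sf-instance is a matrix $A\in\mathbb{N}_0^{\mathcal{A}\times X}$ ($\mathcal{A}$ a non-empty finite set) with every column nonzero and $AS=0$. An sf-realization is an sf-instance with $\operatorname{im}A^\top=\ker S^\top$. Let $\mathcal{A}$ be a non-empty finite set and $\mathrm{val}:\mathcal{A}\to\mathbb{N}=\{1,2,\dots\}$ a function. Consider multigraphs (loops allowed) with vertex colouring $\alpha:V\to\mathcal{A}$. The degree $d(u)$ of a vertex is the number of non-loop edge incidences at $u$ plus twice the number of loops at $u$. A Lewis instance is an assignment of vertex-coloured multigraphs $\Gamma_x=(V_x,E_x,\alpha_x)$ to all $x\in X$ such that: - (i) $d(u)=\mathrm{val}(\alpha_x(u))$ for all $u\in V_x$ and $x\in X$; - (ii) the matrix $A$ with $A_{ax}=|\{u\in V_x:\alpha_x(u)=a\}|$ is an sf-instance. A Lewis realization is a Lewis instance whose matrix $A$ is an sf-realization (for some choice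 of $\mathcal{A}$ and $\mathrm{val}$). *)

From HB Require Import structures.
From mathcomp Require Import all_boot all_order all_algebra.
From mathcomp Require Import reals.
Set Implicit Arguments. Unset Strict Implicit. Unset Printing Implicit Defensive.
Import Order.TTheory GRing.Theory Num.Theory.
Local Open Scope ring_scope.

(* A finite vertex-coloured multigraph (loops and parallel edges allowed):
   each edge e has two endpoints (ends e).1, (ends e).2 (a loop has them equal). *)
Record mgraph (Acol : finType) := MGraph {
  vert : finType;
  edge : finType;
  ends : edge -> vert * vert;
  colour : vert -> Acol
}.

(* degree: number of non-loop edge incidences plus twice the number of loops *)
Definition mdeg (Acol : finType) (G : mgraph Acol) (u : vert G) : nat :=
  (#|[set e : edge G | (ends e).1 == u]| + #|[set e : edge G | (ends e).2 == u]|)%N.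

Section RN.
Variables (X Rr : finType) (sm sp : X -> Rr -> nat).

Definition stoich (x : X) (r : Rr) : int := (sp x r)%:Z - (sm x r)%:Z.

Definition closed_RN : Prop :=
  forall r : Rr, exists x y : X, (stoich x r < 0) /\ (0 < stoich y r).

Definition conservative (R : realType) : Prop :=
  exists m : X -> R, (forall x, 0 < m x) /\
    forall r : Rr, \sum_(x : X) m x * (stoich x r)%:~R = 0.

Definition sf_instance (Acol : finType) (A : Acol -> X -> nat) : Prop :=
  (0 < #|Acol|)%N /\
  (forall x : X, exists a : Acol, A a x <> 0%N) /\
  (forall (a : Acol) (r : Rr), \sum_(x : X) (A a x)%:Z * stoich x r = 0).

(* sf-realization: additionally im A^T = ker S^T (as subspaces of R^X) *)
Definition sf_realization (R : realType) (Acol : finType) (A : Acol -> X -> nat) : Prop :=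
  sf_instance A /\
  forall v : X -> R,
    (forall r : Rr, \sum_(x : X) v x * (stoich x r)%:~R = 0) <->
    (exists c : Acol -> R, forall x : X, v x = \sum_(a : Acol) c a * (A a x)%:R).

Definition lewis_matrix (Acol : finType) (G : X -> mgraph Acol) : Acol -> X -> nat :=
  fun a x => #|[set u : vert (G x) | colour u == a]|.

Definition lewis_instance (Acol : finType) (val : Acol -> nat) (G : X -> mgraph Acol) : Prop :=
  (forall (x : X) (u : vert (G x)), mdeg u = val (colour u)) /\
  sf_instance (lewis_matrix G).

Definition lewis_realization (R : realType) : Prop :=
  exists (Acol : finType) (val : Acol -> nat) (G : X -> mgraph Acol),
    (0 < #|Acol|)%N /\ (forall a, 0 < val a)%N /\
    lewis_instance val G /\ sf_realization R (lewis_matrix G).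

End RN.

From HB Require Import structures.
From mathcomp Require Import all_boot all_order all_algebra.
From mathcomp Require Import reals ring lra zify.
Set Implicit Arguments. Unset Strict Implicit. Unset Printing Implicit Defensive.
Import Order.TTheory GRing.Theory Num.Theory.
Local Open Scope ring_scope.

(* A Lewis realization is in particular an sf-instance, and the column sums
   of an sf-instance form a positive vector of ker S^T.  Conversely, let m > 0
   lie in ker S^T.  Clearing denominators in the rational kernel of S^T gives
   integer vectors b_i spanning ker S^T, so m = sum_i c_i b_i; rounding the
   N c_i down for N large gives a positive integer vector M of ker S^T.  For L
   large the rows M and L M + b_i are nonnegative, lie in ker S^T and span it,
   i.e. they form an sf-realization.  Any nonnegative integer matrix is the
   Lewis matrix of the graphs whose vertices each carry a single loop, all of
   valence 2. *)

Section LeftKernel.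
Variables (X Rr : finType).

Definition in_kerT (T : pzSemiRingType) (s : X -> Rr -> T) (v : X -> T) : Prop :=
  forall r, \sum_x v x * s x r = 0.

Lemma in_kerT_sum (T : pzSemiRingType) (s : X -> Rr -> T) (I : finType)
    (u : I -> X -> T) :
  (forall i, in_kerT s (u i)) -> in_kerT s (fun x => \sum_i u i x).
Proof.
move=> uker r; under eq_bigr do rewrite mulr_suml.
by rewrite exchange_big big1 // => i _; apply: uker.
Qed.

Lemma in_kerT_scale (T : pzSemiRingType) (s : X -> Rr -> T) (a : T) (u : X -> T) :
  in_kerT s u -> in_kerT s (fun x => a * u x).
Proof.
by move=> uker r; under eq_bigr do rewrite -mulrA; rewrite -mulr_sumr uker mulr0.
Qed.

Lemma in_kerT_add (T : pzSemiRingType) (s : X -> Rr -> T) (u v : X -> T) :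
  in_kerT s u -> in_kerT s v -> in_kerT s (fun x => u x + v x).
Proof.
move=> uker vker r; under eq_bigr do rewrite mulrDl.
by rewrite big_split /= uker vker addr0.
Qed.

Lemma in_kerT_intr (T : pzRingType) (s : X -> Rr -> int) (w : X -> int) :
  in_kerT s w -> in_kerT (fun x r => (s x r)%:~R : T) (fun x => (w x)%:~R).
Proof. by move=> wker r; under eq_bigr do rewrite -intrM; rewrite -rmorph_sum wker. Qed.

End LeftKernel.

Lemma sum_enum_rank (X : finType) (V : nmodType) (F : 'I_#|X| -> V) :
  \sum_(x : X) F (enum_rank x) = \sum_(j < #|X|) F j.
Proof.
rewrite [RHS](reindex (@enum_rank X)) //.
by exists enum_val => ? _; [exact: enum_rankK | exact: enum_valK].
Qed.

Lemma big_option (I : finType) (V : nmodType) (F : option I -> V) :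
  \sum_o F o = F None + \sum_i F (Some i).
Proof.
rewrite (bigD1 None) //=; congr (_ + _).
by rewrite (reindex_omap Some id) => [|[i|] //]; apply: eq_bigl => i; rewrite eqxx.
Qed.

Section ClearDenominators.
Variables (n : nat) (q : 'I_n -> rat).

Definition denom_prod : int := \prod_j denq (q j).

Definition clear_denom (j : 'I_n) : int :=
  numq (q j) * \prod_(j' | j' != j) denq (q j').

Lemma clear_denomE j : (clear_denom j)%:~R = q j * denom_prod%:~R.
Proof. by rewrite /denom_prod (bigD1 j) //= !intrM numqE mulrA. Qed.

Lemma denom_prod_neq0 : denom_prod%:~R != 0 :> rat.
Proof.
by rewrite intr_eq0 prodf_seq_neq0; apply/allP => j _; rewrite denq_neq0.
Qed.

End ClearDenominators.

Section IntegerKernelGenerators.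
Variables (X Rr : finType) (s : X -> Rr -> int).

Let Sq : 'M[rat]_(#|X|, #|Rr|) := \matrix_(j, l) (s (enum_val j) (enum_val l))%:~R.

Let kerrow (i : 'I_#|X|) : 'I_#|X| -> rat := fun j => kermx Sq i j.

Definition int_kerT_gen (i : 'I_#|X|) (x : X) : int :=
  clear_denom (kerrow i) (enum_rank x).

Lemma int_kerT_gen_in_kerT i : in_kerT s (int_kerT_gen i).
Proof.
move=> r; apply: (@intr_inj rat); rewrite rmorph_sum rmorph0 /=.
have termE x : ((int_kerT_gen i x * s x r)%:~R : rat) =
    kerrow i (enum_rank x) * Sq (enum_rank x) (enum_rank r) * (denom_prod (kerrow i))%:~R.
  by rewrite intrM clear_denomE mxE !enum_rankK mulrAC.
under eq_bigr do rewrite termE.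
rewrite (sum_enum_rank (fun j => kerrow i j * Sq j (enum_rank r) * _)) -mulr_suml.
by have /matrixP/(_ i (enum_rank r)) := mulmx_ker Sq; rewrite !mxE => ->; rewrite mul0r.
Qed.

Lemma int_kerT_gen_span (R : numFieldType) (v : X -> R) :
  in_kerT (fun x r => (s x r)%:~R) v ->
  exists c : 'I_#|X| -> R, forall x, v x = \sum_i c i * (int_kerT_gen i x)%:~R.
Proof.
move=> vker; pose vr : 'rV[R]_#|X| := \row_j v (enum_val j).
have : (vr <= kermx (map_mx ratr Sq))%MS.
  apply/sub_kermxP/rowP => l; rewrite !mxE -sum_enum_rank -[RHS](vker (enum_val l)).
  by apply: eq_bigr => x _; rewrite !mxE enum_rankK ratr_int.
rewrite -map_kermx => /submxP [w vrE].
exists (fun i => w 0 i / (denom_prod (kerrow i))%:~R) => x.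
have -> : v x = vr 0 (enum_rank x) by rewrite mxE enum_rankK.
rewrite vrE !mxE; apply: eq_bigr => i _.
have kerrowE : kerrow i (enum_rank x) =
    (int_kerT_gen i x)%:~R / (denom_prod (kerrow i))%:~R.
  by rewrite clear_denomE mulfK ?denom_prod_neq0.
by rewrite mxE -/(kerrow i _) kerrowE fmorph_div /= !ratr_int mulrAC mulrA.
Qed.

End IntegerKernelGenerators.

Section PositiveIntegerCombination.
Variables (R : archiRealFieldType) (X I : finType).

Lemma exists_nat_mul_gt (f m : X -> R) :
  (forall x, 0 < m x) -> exists N : nat, forall x, f x < N%:R * m x.
Proof.
move=> mpos; exists (\sum_x (Num.truncn (f x / m x)).+1)%N => x.
have := truncnS_gt (f x / m x); rewrite ltr_pdivrMr // => /lt_le_trans; apply.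
apply: ler_wpM2r; first exact: ltW.
by rewrite ler_nat (bigD1 x) //= leq_addr.
Qed.

Lemma exists_pos_int_comb (b : I -> X -> int) (m : X -> R) (c : I -> R) :
  (forall x, 0 < m x) -> (forall x, m x = \sum_i c i * (b i x)%:~R) ->
  exists z : I -> int, forall x, 0 < \sum_i z i * b i x.
Proof.
move=> mpos mE.
have [N mN] := exists_nat_mul_gt (fun x => \sum_i `|(b i x)%:~R : R|) mpos.
exists (fun i => Num.floor (N%:R * c i)) => x; rewrite -(ltr0z R) rmorph_sum /=.
have rounding : N%:R * m x - \sum_i ((Num.floor (N%:R * c i) * b i x)%:~R)
    <= \sum_i `|(b i x)%:~R : R|.
  rewrite mE mulr_sumr -sumrB; apply: ler_sum => i _.
  rewrite intrM mulrA -mulrBl.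
  have /andP [floor_le lt_floor1] := floor_itv (N%:R * c i).
  apply: (le_trans (ler_norm _)); rewrite normrM ger0_norm ?subr_ge0 //.
  by apply: ler_piMl => //; move: lt_floor1; rewrite intrD; lra.
by have := mN x; lra.
Qed.

End PositiveIntegerCombination.

Lemma exists_shift_nonneg (X I : finType) (M : X -> int) (b : I -> X -> int) :
  (forall x, 0 < M x) -> exists L : int, forall i x, 0 <= L * M x + b i x.
Proof.
move=> Mpos; exists (\sum_i \sum_x `|b i x|) => i x.
have bL : `|b i x| <= \sum_i \sum_x `|b i x|.
  rewrite (bigD1 i) //= (bigD1 x) //= -addrA lerDl.
  by rewrite addr_ge0 ?sumr_ge0 // => *; rewrite sumr_ge0.
by have := Mpos x; have := ler_norm (- b i x); rewrite normrN; nia.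
Qed.

Section ShiftedRows.
Variables (X Rr : finType) (sm sp : X -> Rr -> nat) (I : finType).
Variables (M : X -> int) (L : int) (b : I -> X -> int).
Local Notation S := (stoich sm sp).
Hypotheses (Mpos : forall x, 0 < M x) (Mker : in_kerT S M).
Hypotheses (shifted_ge0 : forall i x, 0 <= L * M x + b i x).
Hypothesis bker : forall i, in_kerT S (b i).

Definition shifted_row (a : option I) (x : X) : int :=
  if a is Some i then L * M x + b i x else M x.

Definition shift_matrix (a : option I) (x : X) : nat := `|shifted_row a x|%N.

Lemma shift_matrixE a x : (shift_matrix a x)%:Z = shifted_row a x.
Proof. by rewrite gez0_abs //; case: a => [i|]; [exact: shifted_ge0 | exact: ltW]. Qed.

Lemma shift_matrix_in_kerT a : in_kerT S (fun x => (shift_matrix a x)%:Z).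
Proof.
move=> r; under eq_bigr do rewrite shift_matrixE.
case: a => [i|]; last exact: Mker.
by apply: in_kerT_add; [exact: in_kerT_scale | exact: bker].
Qed.

Lemma sf_instance_shift_matrix : sf_instance sm sp shift_matrix.
Proof.
split; first by rewrite card_option.
split=> [x|]; last exact: shift_matrix_in_kerT.
by exists None; apply/eqP; rewrite absz_eq0 gt_eqF.
Qed.

Lemma sf_realization_shift_matrix (R : realType) :
  (forall v : X -> R, in_kerT (fun x r => (S x r)%:~R) v ->
     exists c, forall x, v x = \sum_i c i * (b i x)%:~R) ->
  sf_realization sm sp R shift_matrix.
Proof.
move=> bspan; split; first exact: sf_instance_shift_matrix.
move=> v; split=> [/bspan [c vE] | [c vE]].
  exists (fun a => if a is Some i then c i else - (L%:~R * \sum_i c i)) => x.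
  have rowE a : ((shift_matrix a x)%:R : R) = (shifted_row a x)%:~R.
    by rewrite -shift_matrixE.
  under eq_bigr do rewrite rowE.
  rewrite big_option vE /shifted_row.
  have splitE : \sum_i c i * (L * M x + b i x)%:~R =
      (\sum_i c i) * (L%:~R * (M x)%:~R) + \sum_i c i * (b i x)%:~R.
    by rewrite mulr_suml -big_split; apply: eq_bigr => i _; rewrite intrD intrM mulrDr.
  by rewrite splitE; ring.
suff vker : in_kerT (fun x r => (S x r)%:~R)
                    (fun x => \sum_a c a * (shift_matrix a x)%:R).
  by move=> r; rewrite -[RHS](vker r); apply: eq_bigr => x _; rewrite vE.
apply: in_kerT_sum => a; apply: in_kerT_scale.
exact: (in_kerT_intr R (shift_matrix_in_kerT a)).
Qed.

End ShiftedRows.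

Section LoopGraph.
Variables (Acol X : finType) (A : Acol -> X -> nat).

Definition loop_graph (x : X) : mgraph Acol :=
  @MGraph Acol {a : Acol & 'I_(A a x)} {a : Acol & 'I_(A a x)} (fun e => (e, e)) tag.

Lemma mdeg_loop_graph x (u : vert (loop_graph x)) : mdeg u = 2%N.
Proof.
rewrite /mdeg /=.
suff -> : [set e : {a : Acol & 'I_(A a x)} | e == u] = [set u] by rewrite cards1.
by apply/setP => e; rewrite !inE.
Qed.

Lemma lewis_matrix_loop_graph a x : lewis_matrix loop_graph a x = A a x.
Proof.
rewrite /lewis_matrix -[RHS]card_ord -cardsT.
rewrite -(card_imset _ (@eq_from_Tagged _ (fun a => 'I_(A a x)) a)).
apply: eq_card => -[a' j]; rewrite !inE /=.
apply/eqP/imsetP => [ea | [j' _ e]]; last exact: (congr1 tag e).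
by subst a'; exists j.
Qed.

End LoopGraph.

Section ReactionNetwork.
Variables (X Rr : finType) (sm sp : X -> Rr -> nat).
Local Notation S := (stoich sm sp).

Lemma sf_instance_ext (Acol : finType) (A B : Acol -> X -> nat) :
  (forall a x, A a x = B a x) -> sf_instance sm sp A -> sf_instance sm sp B.
Proof.
move=> AB [Acol0 [Anz Aker]]; split=> //; split=> [x | a r].
  by have [a Aax] := Anz x; exists a; rewrite -AB.
by rewrite -[RHS](Aker a r); apply: eq_bigr => x _; rewrite AB.
Qed.

Lemma sf_realization_ext (R : realType) (Acol : finType) (A B : Acol -> X -> nat) :
  (forall a x, A a x = B a x) -> sf_realization sm sp R A -> sf_realization sm sp R B.
Proof.
move=> AB [Ainst Aspan]; split; first exact: sf_instance_ext Ainst.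
move=> v; rewrite Aspan; split=> -[c vE]; exists c => x; rewrite vE;
  by apply: eq_bigr => a _; rewrite AB.
Qed.

Lemma conservative_of_sf_instance (R : realType) (Acol : finType) (A : Acol -> X -> nat) :
  sf_instance sm sp A -> conservative sm sp R.
Proof.
move=> [_ [Anz Aker]]; exists (fun x => \sum_a (A a x)%:R); split.
  move=> x; have [a Aax] := Anz x.
  by rewrite (bigD1 a) //= ltr_wpDr ?sumr_ge0 // ltr0n lt0n; apply/eqP.
exact: (in_kerT_sum (fun a => in_kerT_intr R (Aker a))).
Qed.

Lemma sf_realization_of_conservative (R : realType) :
  conservative sm sp R -> exists (Acol : finType) (A : Acol -> X -> nat),
    sf_realization sm sp R A.
Proof.
move=> [m [mpos mker]].
pose b := int_kerT_gen S.
have [c mE] := int_kerT_gen_span mker.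
have [z Mpos] := exists_pos_int_comb mpos mE.
pose M x := \sum_i z i * b i x.
have Mker : in_kerT S M.
  exact: in_kerT_sum (fun i => in_kerT_scale (z i) (int_kerT_gen_in_kerT S i)).
have [L shifted_ge0] := exists_shift_nonneg b Mpos.
exists _, (shift_matrix M L b).
apply: (@sf_realization_shift_matrix _ _ sm sp _ M L b Mpos Mker shifted_ge0) => [|v].
  exact: int_kerT_gen_in_kerT.
exact: int_kerT_gen_span.
Qed.

Lemma lewis_realization_of_sf_realization (R : realType) (Acol : finType)
    (A : Acol -> X -> nat) :
  sf_realization sm sp R A -> lewis_realization sm sp R.
Proof.
move=> Areal; have [[Acol0 _] _] := Areal.
have Greal := sf_realization_ext (fun a x => esym (lewis_matrix_loop_graph A a x)) Areal.
exists Acol, (fun _ => 2%N), (loop_graph A).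
do 3!split=> //; split; [exact: mdeg_loop_graph | exact: Greal.1].
Qed.

End ReactionNetwork.

Theorem proposition13 (R : realType) (X Rr : finType) (sm sp : X -> Rr -> nat) :
  (0 < #|X|)%N -> (0 < #|Rr|)%N -> closed_RN sm sp ->
  (lewis_realization sm sp R <-> conservative sm sp R).
Proof.
move=> _ _ _; split.
  move=> [Acol [val [G [_ [_ [[_ Ginst] _]]]]]].
  exact: conservative_of_sf_instance Ginst.
by move=> /sf_realization_of_conservative [Acol [A /lewis_realization_of_sf_realization]].
Qed.
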